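(* The convex hull $\hat\Omega_n$ of the spectral ball $\Omega_n$ equals $\{A\in\mathcal M_n: |\operatorname{tr}(A)|<n\}$.
   Context: $\mathcal M_n$ is the space of complex $n\times n$ matrices; $r(A)$ denotes the spectral radius of $A$; $\Omega_n=\{A\in\mathcal M_n: r(A)<1\}$; $\operatorname{tr}$ is the trace. *)

From mathcomp Require Import all_boot all_order all_algebra.
From mathcomp Require Import complex.
From mathcomp Require Import reals.
Set Implicit Arguments. Unset Strict Implicit. Unset Printing Implicit Defensive.
Import Order.TTheory GRing.Theory Num.Theory.
Local Open Scope ring_scope.
Local Open Scope complex_scope.

Definition spectral_ball (R : realType) (n : nat) (A : 'M[R[i]]_n) : Prop :=
  forall l : R[i], eigenvalue A l -> `|l| < 1.

Definition convex_hull (R : realType) (n : nat) (S : 'M[R[i]]_n -> Prop)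
    (A : 'M[R[i]]_n) : Prop :=
  exists (k : nat) (t : 'I_k -> R) (B : 'I_k -> 'M[R[i]]_n),
    [/\ forall j, 0 <= t j,
        \sum_(j < k) t j = 1,
        forall j, S (B j) &
        A = \sum_(j < k) (t j)%:C *: B j].

From mathcomp Require Import all_boot all_order all_algebra.
From mathcomp Require Import complex.
From mathcomp Require Import reals.
From mathcomp Require Import ring.
Set Implicit Arguments. Unset Strict Implicit. Unset Printing Implicit Defensive.
Import Order.TTheory GRing.Theory Num.Theory.
Local Open Scope ring_scope.
Local Open Scope complex_scope.

(* The trace is the sum of the eigenvalues, so |tr B| < n on the spectral ball,
   and this bound survives convex combinations since the open disk is convex.
   Conversely, write A = c + M with c = tr A / n, so |c| < 1 and tr M = 0.
   A traceless matrix is a sum of square-zero matrices N_x: the off-diagonal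
   entries M_ij E_ij, and the diagonal differences M_ii (E_ii - E_00), each of
   which splits by polarization into two rank-one square-zero matrices. If there
   are K such N_x, every c + K N_x has c as its only eigenvalue, and A is their
   average. *)

Lemma ltr_norm_convex_comb (C : numDomainType) (I : finType) (t z : I -> C) (r : C) :
  (forall j, 0 <= t j) -> \sum_j t j = 1 -> (forall j, `|z j| < r) ->
  `|\sum_j t j * z j| < r.
Proof.
move=> t_ge0 t_sum1 z_lt.
have /existsP[j0 t_j0_gt0] : [exists j, 0 < t j].
  apply: contraLR (oner_neq0 C) => /existsPn t_eq0; rewrite negbK -t_sum1.
  by rewrite big1 // => j _; apply/eqP; move: (t_eq0 j); rewrite lt0r t_ge0 andbT negbK.
rewrite -[r]mul1r -t_sum1 mulr_suml; apply: le_lt_trans (ler_norm_sum _ _ _) _.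
rewrite (bigD1 j0) //= [X in _ < X](bigD1 j0) //= normrM ger0_norm //.
apply: ltr_leD; first by rewrite ltr_pM2l.
by apply: ler_sum => j _; rewrite normrM ger0_norm // ler_wpM2l // ltW.
Qed.

Lemma ltr_norm_sum_size (C : numDomainType) (s : seq C) :
  s != [::] -> {in s, forall z, `|z| < 1} -> `|\sum_(z <- s) z| < (size s)%:R.
Proof.
move=> s_neq0 s_lt1; apply: le_lt_trans (ler_norm_sum _ _ _) _.
rewrite -sum1_size natr_sum.
rewrite big_seq_cond [X in _ < X]big_seq_cond; apply: ltr_sum => [|z /andP[zs _]].
  by case: s s_neq0 {s_lt1} => //= z s _; rewrite mem_head.
exact: s_lt1.
Qed.

Lemma mxtrace_sum_eigenvalues (F : closedFieldType) n (B : 'M[F]_n) :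
  exists s : seq F,
    [/\ size s = n, {in s, forall z, eigenvalue B z} & \tr B = \sum_(z <- s) z].
Proof.
have [s def_char] := closed_field_poly_normal (char_poly B).
rewrite (monicP (char_poly_monic B)) scale1r in def_char.
have size_s : size s = n.
  by have := size_char_poly B; rewrite def_char size_prod_XsubC => -[].
exists s; split=> // [z zs|].
  by rewrite eigenvalue_root_char def_char root_prod_XsubC.
case: n B size_s def_char => [|n] B size_s def_char.
  by move/size0nil: size_s => ->; rewrite big_nil /mxtrace big_ord0.
apply: oppr_inj; rewrite -char_poly_trace // def_char -coefPn_prod_XsubC ?size_s //.
Qed.

Lemma eigenvalue_add_scalar_sqr0 (F : fieldType) n (c l : F) (N : 'M[F]_n) :
  N *m N = 0 -> eigenvalue (c%:M + N) l -> l = c.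
Proof.
move=> N_sqr0 /eigenvalueP[v v_eig v_neq0].
have vN : v *m N = (l - c) *: v.
  by rewrite scalerBl -v_eig mulmxDr mul_mx_scalar addrC addKr.
have : (l - c) ^+ 2 *: v = 0.
  by rewrite expr2 -scalerA -vN scalemxAl -vN -mulmxA N_sqr0 mulmx0.
by move/eqP; rewrite scaler_eq0 (negPf v_neq0) orbF expf_eq0 subr_eq0 => /eqP.
Qed.

Lemma sum_sign_mulmx (R : comPzRingType) m p q (a c : 'M[R]_(m, p)) (r t : 'M[R]_(p, q)) :
  \sum_(b : bool) (a - (-1) ^+ b *: c) *m (r + (-1) ^+ b *: t)
    = 2%:R *: (a *m r - c *m t).
Proof.
rewrite big_bool /= expr1 expr0 !scaleN1r !scale1r opprK.
rewrite !(mulmxDl, mulmxBl, mulmxDr, mulmxBr, mulmxN, mulNmx).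
move: (a *m r) (a *m t) (c *m r) (c *m t) => x y z w.
by apply/matrixP => i j; rewrite !mxE; ring.
Qed.

Section TracelessSqr0Decomposition.
Variables (F : numFieldType) (n : nat) (i0 : 'I_n).

(* An index (i, j, b) with i != j carries half of M_ij E_ij; an index (i, i, b)
   carries half of M_ii (e_i - s e_i0)(e_i + s e_i0)^T with s = (-1)^b, and the
   two signs add up to M_ii (E_ii - E_i0i0). *)
Definition sqr0_col (x : 'I_n * 'I_n * bool) : 'cV[F]_n :=
  let: (i, j, b) := x in
  if i == j then delta_mx i 0 - (-1) ^+ b *: delta_mx i0 0 else delta_mx i 0.

Definition sqr0_row (x : 'I_n * 'I_n * bool) : 'rV[F]_n :=
  let: (i, j, b) := x in
  if i == j then delta_mx 0 i + (-1) ^+ b *: delta_mx 0 i0 else delta_mx 0 j.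

Definition sqr0_part (M : 'M[F]_n) (x : 'I_n * 'I_n * bool) : 'M[F]_n :=
  (M x.1.1 x.1.2 / 2) *: (sqr0_col x *m sqr0_row x).

Lemma sqr0_row_col x : sqr0_row x *m sqr0_col x = 0.
Proof.
case: x => [[i j] b]; rewrite /sqr0_row /sqr0_col; have [_|neq_ij] := eqVneq i j.
  rewrite mulmxDl !mulmxBr -!scalemxAl -!scalemxAr !mul_delta_mx_cond scalerA.
  by rewrite -expr2 sqrr_sign scale1r !eqxx (eq_sym i0) addrA subrK subrr.
by rewrite mul_delta_mx_cond eq_sym (negPf neq_ij) mulr0n.
Qed.

Lemma sqr0_part_sqr0 M x : sqr0_part M x *m sqr0_part M x = 0.
Proof.
rewrite -scalemxAl -scalemxAr mulmxA -(mulmxA (sqr0_col x)) sqr0_row_col.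
by rewrite mulmx0 mul0mx !scaler0.
Qed.

Lemma sum_bool_sqr0_part M i j :
  \sum_(b : bool) sqr0_part M (i, j, b)
    = M i j *: delta_mx i j - (if i == j then M i i *: delta_mx i0 i0 else 0).
Proof.
rewrite /sqr0_part /=; case: eqVneq => [<-|_].
  rewrite -scaler_sumr sum_sign_mulmx !mul_delta_mx scalerA divfK ?pnatr_eq0 //.
  exact: scalerBr.
by rewrite big_bool /= -scalerDl -splitr mul_delta_mx subr0.
Qed.

Lemma sum_sqr0_part M : \sum_x sqr0_part M x = M - \tr M *: delta_mx i0 i0.
Proof.
rewrite (eq_bigr (fun x => sqr0_part M (x.1.1, x.1.2, x.2))); last by case=> [[]].
rewrite -(pair_bigA _ (fun y b => sqr0_part M (y.1, y.2, b))) /=.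
rewrite -(pair_bigA _ (fun i j => \sum_b sqr0_part M (i, j, b))) /=.
under eq_bigr do under eq_bigr do rewrite sum_bool_sqr0_part.
under eq_bigr do rewrite sumrB.
rewrite sumrB -matrix_sum_delta; congr (_ - _).
under eq_bigr => i _ do rewrite -big_mkcond (big_pred1 i (eq_sym i)).
by rewrite -scaler_suml.
Qed.

End TracelessSqr0Decomposition.

Lemma spectral_ball_norm_trace (R : realType) n (B : 'M[R[i]]_n) :
  (0 < n)%N -> spectral_ball B -> `|\tr B| < n%:R.
Proof.
move=> n_gt0 B_ball; have [s [size_s s_eig ->]] := mxtrace_sum_eigenvalues B.
rewrite -size_s; apply: ltr_norm_sum_size => [|z /s_eig]; last exact: B_ball.
by rewrite -size_eq0 size_s -lt0n.
Qed.

Lemma convex_hull_norm_trace_lt (R : realType) n (S : 'M[R[i]]_n -> Prop) (r : R[i]) A :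
  (forall B, S B -> `|\tr B| < r) -> convex_hull S A -> `|\tr A| < r.
Proof.
move=> S_lt [k [t [B [t_ge0 t_sum1 SB ->]]]].
rewrite raddf_sum /=; under eq_bigr do rewrite mxtraceZ.
apply: ltr_norm_convex_comb => [j||j]; last exact: S_lt.
- by rewrite lecR.
- by rewrite -rmorph_sum t_sum1.
Qed.

Lemma convex_hull_mean (R : realType) n (S : 'M[R[i]]_n -> Prop) (T : finType)
    (B : T -> 'M[R[i]]_n) :
  (0 < #|T|)%N -> (forall x, S (B x)) -> convex_hull S ((#|T|%:R)^-1 *: \sum_x B x).
Proof.
move=> T_gt0 SB; exists #|T|, (fun=> #|T|%:R^-1), (fun j => B (enum_val j)); split=> //.
- by move=> _; rewrite invr_ge0 ler0n.
- by rewrite sumr_const card_ord -[_ *+ _]mulr_natr mulVf // pnatr_eq0 -lt0n.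
- by rewrite fmorphV rmorph_nat -scaler_sumr -(big_enum_val B).
Qed.

Theorem proposition4 (R : realType) (n : nat) (hn : (0 < n)%N) (A : 'M[R[i]]_n) :
  convex_hull (@spectral_ball R n) A <-> `|\tr A| < n%:R.
Proof.
split.
  by apply: convex_hull_norm_trace_lt => B; apply: spectral_ball_norm_trace.
move=> tr_lt.
pose c := \tr A / n%:R.
pose N := sqr0_part (Ordinal hn) (A - c%:M).
pose T : finType := ('I_n * 'I_n * bool)%type.
have T_gt0 : (0 < #|T|)%N by rewrite !card_prod !card_ord card_bool !muln_gt0 hn.
have card_neq0 : (#|T|%:R : R[i]) != 0 by rewrite pnatr_eq0 -lt0n.
have trM : \tr (A - c%:M) = 0.
  by rewrite raddfB /= mxtrace_scalar -mulr_natr divfK ?subrr // pnatr_eq0 -lt0n.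
have -> : A = #|T|%:R^-1 *: \sum_(x : T) (c%:M + #|T|%:R *: N x).
  rewrite big_split /= sumr_const -scaler_sumr sum_sqr0_part trM scale0r subr0.
  by rewrite -[c%:M *+ _]scaler_nat -scalerDr scalerA mulVf // scale1r addrC subrK.
apply: convex_hull_mean => // x l /eigenvalue_add_scalar_sqr0 -> .
- by rewrite normrM normfV normr_nat ltr_pdivrMr ?mul1r ?ltr0n.
- by rewrite -scalemxAl -scalemxAr sqr0_part_sqr0 !scaler0.
Qed.
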